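(* Let $\mathcal X\subseteq\mathcal Y$ be subcategories of $\mathcal C$ such that $\mathcal Y$ is closed under extensions and $\mathcal X$ is a generator of $\mathcal Y$. Let $n\ge1$ and suppose there are $\mathbb E$-triangles $K_{i+1}\to Y_i\to K_i\dashrightarrow$ for $1\le i\le n$ with $K_1=A$, $K_{n+1}=A'$ and all $Y_i\in\mathcal Y$. Then there exist objects $U_n,V_n\in\mathcal C$ such that $U_n\in\mathcal Y$, there is an $\mathbb E$-triangle $U_n\to V_n\to A'\dashrightarrow$, and there are $\mathbb E$-triangles $L_{i+1}\to X_i\to L_i\dashrightarrow$ for $1\le i\le n$ with $L_1=A$, $L_{n+1}=V_n$ and all $X_i\in\mathcal X$.
   Context: $(\mathcal C,\mathbb E,\mathfrak s)$ is an extriangulated category in the sense of Nakaoka–Palu, Krull–Schmidt, with enough projectives and enough injectives; subcategories are full, additive, closed under isomorphisms. Closed under extensions: for every $\mathbb E$-triangle $A\to B\to C\dashrightarrow$ with $A,C$ in the subcategory, $B$ is in it. A subcategory $\mathcal X$ is a generator for $\mathcal Y$ if $\mathcal X\subseteq\mathcal Y$ and every $Y\in\mathcal Y$ admits an $\mathbb E$-triangle $Y'\to X\to Y\dashrightarrow$ with $X\in\mathcal X$ and $Y'\in\mathcal Y$. *)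

From HB Require Import structures.
From mathcomp Require Import all_boot all_algebra.
Set Implicit Arguments. Unset Strict Implicit. Unset Printing Implicit Defensive.
Import GRing.Theory.
Local Open Scope ring_scope.

Record PreAddCat := {
  Obj : Type;
  Hom : Obj -> Obj -> zmodType;
  idm : forall A, Hom A A;
  comp : forall A B C, Hom B C -> Hom A B -> Hom A C  (* comp g f = g o f *)
}.
Arguments Hom {p}.
Arguments idm {p}.
Arguments comp {p A B C}.

Section Cat.
Variable C : PreAddCat.

Definition iso (A B : Obj C) (f : Hom A B) :=
  exists g : Hom B A, comp g f = idm A /\ comp f g = idm B.

Definition isBiprod (A B S : Obj C) (i1 : Hom A S) (i2 : Hom B S)
    (p1 : Hom S A) (p2 : Hom S B) :=
  ((comp p1 i1 = idm A) /\ (comp p2 i2 = idm B) /\ (comp p1 i2 = 0) /\ (comp p2 i1 = 0) /\ (comp i1 p1 + comp i2 p2 = idm S)).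

Definition additive_cat :=
  (((forall (A B D F : Obj C) (h : Hom D F) (g : Hom B D) (f : Hom A B),
         comp h (comp g f) = comp (comp h g) f)) /\ ((forall (A B : Obj C) (f : Hom A B), comp (idm B) f = f /\ comp f (idm A) = f)) /\ ((forall (A B D : Obj C) (g g' : Hom B D) (f : Hom A B),
         comp (g + g') f = comp g f + comp g' f)) /\ ((forall (A B D : Obj C) (g : Hom B D) (f f' : Hom A B),
         comp g (f + f') = comp g f + comp g f')) /\ ((exists Z : Obj C, idm Z = 0) /\
      (forall A B : Obj C, exists S (i1 : Hom A S) (i2 : Hom B S) p1 p2,
         isBiprod i1 i2 p1 p2))).
End Cat.

(* Data of an extriangulated structure: the bifunctor E(-,-) (Ext Cc A = E(Cc,A))
   with its actions a_* (push) and c^* (pull), and the realization s, encoded as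
   the relation "A -x-> B -y-> Cc realizes delta". *)
Record ExtData (C : PreAddCat) := {
  Ext : Obj C -> Obj C -> zmodType;
  push : forall (Cc A A' : Obj C), Hom A A' -> Ext Cc A -> Ext Cc A';
  pull : forall (Cc' Cc A : Obj C), Hom Cc' Cc -> Ext Cc A -> Ext Cc' A;
  realizes : forall (A B Cc : Obj C), Ext Cc A -> Hom A B -> Hom B Cc -> Prop
}.
Arguments Ext {C}.
Arguments push {C e Cc A A'}.
Arguments pull {C e Cc' Cc A}.
Arguments realizes {C e A B Cc}.

Section Extri.
Variables (C : PreAddCat) (E : ExtData C).

Definition ET1 :=
  (((forall (Cc A : Obj C) (d : Ext E Cc A), push (idm A) d = d /\ pull (idm Cc) d = d)) /\ ((forall (Cc A A' A'' : Obj C) (a : Hom A A') (a' : Hom A' A'') (d : Ext E Cc A),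
         push (comp a' a) d = push a' (push a d))) /\ ((forall (Cc'' Cc' Cc A : Obj C) (c : Hom Cc' Cc) (c' : Hom Cc'' Cc') (d : Ext E Cc A),
         pull (comp c c') d = pull c' (pull c d))) /\ ((forall (Cc' Cc A A' : Obj C) (a : Hom A A') (c : Hom Cc' Cc) (d : Ext E Cc A),
         push a (pull c d) = pull c (push a d))) /\ ((forall (Cc A A' : Obj C) (a a' : Hom A A') (d d' : Ext E Cc A),
         push (a + a') d = push a d + push a' d /\ push a (d + d') = push a d + push a d') /\
      (forall (Cc' Cc A : Obj C) (c c' : Hom Cc' Cc) (d d' : Ext E Cc A),
         pull (c + c') d = pull c d + pull c' d /\ pull c (d + d') = pull c d + pull c d'))).

Definition equiv_seq (A B B' Cc : Obj C) (x : Hom A B) (y : Hom B Cc)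
    (x' : Hom A B') (y' : Hom B' Cc) :=
  exists b : Hom B B', iso b /\ comp b x = x' /\ comp y' b = y.

Definition s_realization :=
  (((forall (A Cc : Obj C) (d : Ext E Cc A),
         exists (B : Obj C) (x : Hom A B) (y : Hom B Cc), realizes d x y)) /\ ((forall (A B B' Cc : Obj C) (d : Ext E Cc A) (x : Hom A B) (y : Hom B Cc)
              (x' : Hom A B') (y' : Hom B' Cc),
         realizes d x y -> realizes d x' y' -> equiv_seq x y x' y')) /\ ((forall (A B B' Cc : Obj C) (d : Ext E Cc A) (x : Hom A B) (y : Hom B Cc)
              (x' : Hom A B') (y' : Hom B' Cc),
         realizes d x y -> equiv_seq x y x' y' -> realizes d x' y') /\
      (forall (A B Cc A' B' Cc' : Obj C) (d : Ext E Cc A) (d' : Ext E Cc' A')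
              (x : Hom A B) (y : Hom B Cc) (x' : Hom A' B') (y' : Hom B' Cc')
              (a : Hom A A') (c : Hom Cc Cc'),
         realizes d x y -> realizes d' x' y' -> push a d = pull c d' ->
         exists b : Hom B B', comp b x = comp x' a /\ comp y' b = comp c y))).

Definition ET2 :=
  (forall (A Cc S : Obj C) (i1 : Hom A S) (i2 : Hom Cc S) p1 p2,
     isBiprod i1 i2 p1 p2 -> realizes (0 : Ext E Cc A) i1 p2) /\
  (forall (A A' B B' Cc Cc' SA SB SC : Obj C)
          (iA1 : Hom A SA) (iA2 : Hom A' SA) (pA1 : Hom SA A) (pA2 : Hom SA A')
          (iB1 : Hom B SB) (iB2 : Hom B' SB) (pB1 : Hom SB B) (pB2 : Hom SB B')
          (iC1 : Hom Cc SC) (iC2 : Hom Cc' SC) (pC1 : Hom SC Cc) (pC2 : Hom SC Cc')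
          (d : Ext E Cc A) (d' : Ext E Cc' A')
          (x : Hom A B) (y : Hom B Cc) (x' : Hom A' B') (y' : Hom B' Cc'),
     isBiprod iA1 iA2 pA1 pA2 -> isBiprod iB1 iB2 pB1 pB2 -> isBiprod iC1 iC2 pC1 pC2 ->
     realizes d x y -> realizes d' x' y' ->
     realizes (push iA1 (pull pC1 d) + push iA2 (pull pC2 d'))
              (comp iB1 (comp x pA1) + comp iB2 (comp x' pA2))
              (comp iC1 (comp y pB1) + comp iC2 (comp y' pB2))).

Definition ET3 :=
  forall (A B Cc A' B' Cc' : Obj C) (d : Ext E Cc A) (d' : Ext E Cc' A')
         (x : Hom A B) (y : Hom B Cc) (x' : Hom A' B') (y' : Hom B' Cc')
         (a : Hom A A') (b : Hom B B'),
    realizes d x y -> realizes d' x' y' -> comp b x = comp x' a ->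
    exists c : Hom Cc Cc', comp c y = comp y' b /\ push a d = pull c d'.

Definition ET3op :=
  forall (A B Cc A' B' Cc' : Obj C) (d : Ext E Cc A) (d' : Ext E Cc' A')
         (x : Hom A B) (y : Hom B Cc) (x' : Hom A' B') (y' : Hom B' Cc')
         (b : Hom B B') (c : Hom Cc Cc'),
    realizes d x y -> realizes d' x' y' -> comp y' b = comp c y ->
    exists a : Hom A A', comp x' a = comp b x /\ push a d = pull c d'.

Definition ET4 :=
  forall (A B D Cc F : Obj C) (f : Hom A B) (f' : Hom B D) (g : Hom B Cc) (g' : Hom Cc F)
         (dl : Ext E D A) (dl' : Ext E F B),
    realizes dl f f' -> realizes dl' g g' ->
    exists (Eo : Obj C) (h' : Hom Cc Eo) (d : Hom D Eo) (e : Hom Eo F) (dl'' : Ext E Eo A),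
      ((realizes dl'' (comp g f) h') /\ (comp d f' = comp h' g) /\ (comp e h' = g') /\ (realizes (push f' dl') d e) /\ (pull d dl'' = dl) /\ (push f dl'' = pull e dl')).

Definition ET4op :=
  forall (D A B F Cc : Obj C) (f' : Hom D A) (f : Hom A B) (g' : Hom F B) (g : Hom B Cc)
         (dl : Ext E B D) (dl' : Ext E Cc F),
    realizes dl f' f -> realizes dl' g' g ->
    exists (Eo : Obj C) (d : Hom D Eo) (e : Hom Eo F) (h' : Hom Eo A) (dl'' : Ext E Cc Eo),
      ((realizes dl'' h' (comp g f)) /\ (comp h' d = f') /\ (comp f h' = comp g' e) /\ (realizes (pull g' dl) d e) /\ (dl' = push e dl'') /\ (push d dl = pull g dl'')).

Definition extriangulated :=
  ((additive_cat C) /\ (ET1) /\ (s_realization) /\ (ET2) /\ (ET3) /\ (ET3op) /\ (ET4) /\ (ET4op)).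

Definition has_Etri (A B Cc : Obj C) :=
  exists (x : Hom A B) (y : Hom B Cc) (d : Ext E Cc A), realizes d x y.

(* Full additive subcategory closed under isomorphisms, given by its objects. *)
Definition subcat (P : Obj C -> Prop) :=
  (((forall (A B : Obj C) (f : Hom A B), iso f -> P A -> P B)) /\ ((exists Z : Obj C, idm Z = 0 /\ P Z) /\
      (forall (A B S : Obj C) (i1 : Hom A S) (i2 : Hom B S) p1 p2,
         isBiprod i1 i2 p1 p2 -> P A -> P B -> P S))).

Definition ext_closed (P : Obj C -> Prop) :=
  forall A B Cc : Obj C, has_Etri A B Cc -> P A -> P Cc -> P B.

Definition generator (X Y : Obj C -> Prop) :=
  (forall A, X A -> Y A) /\
  (forall A, Y A -> exists Y' X0, ((X X0) /\ (Y Y') /\ (has_Etri Y' X0 A))).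
End Extri.

From mathcomp Require Import all_boot all_algebra.
Set Implicit Arguments. Unset Strict Implicit. Unset Printing Implicit Defensive.
Import GRing.Theory.
Local Open Scope ring_scope.

(* Given an E-triangle
   U -> L -> K with U in Y and the next triangle K' -> Y_k -> K, the pullback of
   Y_k -> K along L -> K is an object M with E-triangles K' -> M -> L and
   U -> M -> Y_k, so M lies in Y by extension closure.  A generator triangle
   Y'' -> X_k -> M and (ET4)^op then produce L' -> X_k -> L and Y'' -> L' -> K',
   which is the same situation one step further. *)

Lemma morph_add0 (U V : zmodType) (f : U -> V) :
  {morph f : x y / x + y} -> f 0 = 0.
Proof. by move=> fD; apply: (@addrI _ (f 0)); rewrite -fD !addr0. Qed.

Lemma morph_addB (U V : zmodType) (f : U -> V) :
  {morph f : x y / x + y} -> {morph f : x y / x - y}.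
Proof.
move=> fD x y; rewrite fD; congr (_ + _).
by apply: (@addrI _ (f y)); rewrite -fD !subrr (morph_add0 fD).
Qed.

Section Extriangulated.
Variables (C : PreAddCat) (E : ExtData C).
Hypothesis HC : extriangulated E.

Lemma compA (A B D F : Obj C) (h : Hom D F) (g : Hom B D) (f : Hom A B) :
  comp h (comp g f) = comp (comp h g) f.
Proof. by case: HC => [[H _] _]; exact: H. Qed.

Lemma comp1l (A B : Obj C) (f : Hom A B) : comp (idm B) f = f.
Proof. by case: HC => [[_ [H _]] _]; case: (H A B f). Qed.

Lemma comp1r (A B : Obj C) (f : Hom A B) : comp f (idm A) = f.
Proof. by case: HC => [[_ [H _]] _]; case: (H A B f). Qed.

Lemma compDl (A B D : Obj C) (g g' : Hom B D) (f : Hom A B) :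
  comp (g + g') f = comp g f + comp g' f.
Proof. by case: HC => [[_ [_ [H _]]] _]; exact: H. Qed.

Lemma compDr (A B D : Obj C) (g : Hom B D) (f f' : Hom A B) :
  comp g (f + f') = comp g f + comp g f'.
Proof. by case: HC => [[_ [_ [_ [H _]]]] _]; exact: H. Qed.

Lemma comp0l (A B D : Obj C) (f : Hom A B) : comp (0 : Hom B D) f = 0.
Proof. exact: (morph_add0 (f := comp^~ f) (fun g g' => compDl g g' f)). Qed.

Lemma comp0r (A B D : Obj C) (g : Hom B D) : comp g (0 : Hom A B) = 0.
Proof. exact: (morph_add0 (compDr g)). Qed.

Lemma compBl (A B D : Obj C) (g g' : Hom B D) (f : Hom A B) :
  comp (g - g') f = comp g f - comp g' f.
Proof. exact: (morph_addB (f := comp^~ f) (fun g g' => compDl g g' f)). Qed.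

Lemma compBr (A B D : Obj C) (g : Hom B D) (f f' : Hom A B) :
  comp g (f - f') = comp g f - comp g f'.
Proof. exact: (morph_addB (compDr g)). Qed.

Lemma push1 (Cc A : Obj C) (d : Ext E Cc A) : push (idm A) d = d.
Proof. by case: HC => [_ [[H _] _]]; case: (H Cc A d). Qed.

Lemma pull1 (Cc A : Obj C) (d : Ext E Cc A) : pull (idm Cc) d = d.
Proof. by case: HC => [_ [[H _] _]]; case: (H Cc A d). Qed.

Lemma push_comp (Cc A A' A'' : Obj C) (a : Hom A A') (a' : Hom A' A'') (d : Ext E Cc A) :
  push (comp a' a) d = push a' (push a d).
Proof. by case: HC => [_ [[_ [H _]] _]]; exact: H. Qed.

Lemma pull_comp (Cc'' Cc' Cc A : Obj C) (c : Hom Cc' Cc) (c' : Hom Cc'' Cc') (d : Ext E Cc A) :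
  pull (comp c c') d = pull c' (pull c d).
Proof. by case: HC => [_ [[_ [_ [H _]]] _]]; exact: H. Qed.

Lemma push_pull (Cc' Cc A A' : Obj C) (a : Hom A A') (c : Hom Cc' Cc) (d : Ext E Cc A) :
  push a (pull c d) = pull c (push a d).
Proof. by case: HC => [_ [[_ [_ [_ [H _]]]] _]]; exact: H. Qed.

Lemma pushDl (Cc A A' : Obj C) (a a' : Hom A A') (d : Ext E Cc A) :
  push (a + a') d = push a d + push a' d.
Proof. by case: HC => [_ [[_ [_ [_ [_ [H _]]]]] _]]; case: (H Cc A A' a a' d d). Qed.

Lemma pullDl (Cc' Cc A : Obj C) (c c' : Hom Cc' Cc) (d : Ext E Cc A) :
  pull (c + c') d = pull c d + pull c' d.
Proof. by case: HC => [_ [[_ [_ [_ [_ [_ H]]]]] _]]; case: (H Cc' Cc A c c' d d). Qed.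

Lemma pullDr (Cc' Cc A : Obj C) (c : Hom Cc' Cc) (d d' : Ext E Cc A) :
  pull c (d + d') = pull c d + pull c d'.
Proof. by case: HC => [_ [[_ [_ [_ [_ [_ H]]]]] _]]; case: (H Cc' Cc A c c d d'). Qed.

Lemma pull0l (Cc' Cc A : Obj C) (d : Ext E Cc A) : pull (0 : Hom Cc' Cc) d = 0.
Proof. exact: (morph_add0 (f := pull^~ d) (fun c c' => pullDl c c' d)). Qed.

Lemma pullBr (Cc' Cc A : Obj C) (c : Hom Cc' Cc) (d d' : Ext E Cc A) :
  pull c (d - d') = pull c d - pull c d'.
Proof. exact: (morph_addB (pullDr c)). Qed.

Lemma zero_object_exists : exists Z : Obj C, idm Z = 0.
Proof. by case: HC => [[_ [_ [_ [_ [H _]]]]] _]. Qed.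

Lemma biprod_exists (A B : Obj C) :
  exists S (i1 : Hom A S) (i2 : Hom B S) p1 p2, isBiprod i1 i2 p1 p2.
Proof. by case: HC => [[_ [_ [_ [_ [_ H]]]]] _]; exact: H. Qed.

Lemma realizes_exists (A Cc : Obj C) (d : Ext E Cc A) :
  exists (B : Obj C) (x : Hom A B) (y : Hom B Cc), realizes d x y.
Proof. by case: HC => [_ [_ [[H _] _]]]; exact: H. Qed.

Lemma realizes_equiv (A B B' Cc : Obj C) (d : Ext E Cc A) (x : Hom A B) (y : Hom B Cc)
    (x' : Hom A B') (y' : Hom B' Cc) :
  realizes d x y -> realizes d x' y' -> equiv_seq x y x' y'.
Proof. by case: HC => [_ [_ [[_ [H _]] _]]]; exact: H. Qed.

Lemma realizes_morph (A B Cc A' B' Cc' : Obj C) (d : Ext E Cc A) (d' : Ext E Cc' A')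
    (x : Hom A B) (y : Hom B Cc) (x' : Hom A' B') (y' : Hom B' Cc')
    (a : Hom A A') (c : Hom Cc Cc') :
  realizes d x y -> realizes d' x' y' -> push a d = pull c d' ->
  exists b : Hom B B', comp b x = comp x' a /\ comp y' b = comp c y.
Proof. by case: HC => [_ [_ [[_ [_ [_ H]]] _]]]; exact: H. Qed.

Lemma realizes_biprod (A Cc S : Obj C) (i1 : Hom A S) (i2 : Hom Cc S) p1 p2 :
  isBiprod i1 i2 p1 p2 -> realizes (0 : Ext E Cc A) i1 p2.
Proof. by case: HC => [_ [_ [_ [[H _] _]]]]; exact: H. Qed.

Lemma extri_ET3op : ET3op E.
Proof. by case: HC => [_ [_ [_ [_ [_ [H _]]]]]]. Qed.

Lemma extri_ET4 : ET4 E.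
Proof. by case: HC => [_ [_ [_ [_ [_ [_ [H _]]]]]]]. Qed.

Lemma extri_ET4op : ET4op E.
Proof. by case: HC => [_ [_ [_ [_ [_ [_ [_ H]]]]]]]. Qed.

(* (1, 0) maps the split triangle A = A -> 0 to d, and the induced middle map is x. *)
Lemma realizes_comp0 (A B Cc : Obj C) (d : Ext E Cc A) (x : Hom A B) (y : Hom B Cc) :
  realizes d x y -> comp y x = 0.
Proof.
move=> dxy; have [Z Z0] := zero_object_exists.
have AZ : isBiprod (idm A) (0 : Hom Z A) (idm A) (0 : Hom A Z).
  by rewrite /isBiprod comp1l !comp0l !comp0r Z0 addr0; do !split.
have [b []] := realizes_morph (c := 0 : Hom Z Cc) (realizes_biprod AZ) dxy
  (etrans (push1 _) (esym (pull0l Z d))).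
by rewrite !comp1r comp0l => ->.
Qed.

Lemma realizes0_isBiprod (A B Cc : Obj C) (x : Hom A B) (y : Hom B Cc) :
  realizes (0 : Ext E Cc A) x y -> exists (s : Hom Cc B) (r : Hom B A), isBiprod x s r y.
Proof.
move=> xy0; have [S [i1 [i2 [p1 [p2 Sbip]]]]] := biprod_exists A Cc.
have [phi [[psi [psiphi phipsi]] [phii1 p2psi]]] := realizes_equiv (realizes_biprod Sbip) xy0.
exists (comp phi i2), (comp p1 psi).
case: Sbip => [p1i1 [p2i2 [p1i2 [p2i1 i1p1_i2p2]]]].
have -> : y = comp p2 psi by rewrite -p2psi -compA phipsi comp1r.
have psiphiK D (u : Hom D S) : comp psi (comp phi u) = u by rewrite compA psiphi comp1l.
rewrite /isBiprod -phii1 -!compA !psiphiK p1i1 p2i2 p1i2 p2i1; do !split.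
by rewrite -compDr !compA -compDl i1p1_i2p2 comp1l phipsi.
Qed.

Lemma push_of_pull_eq0 (A1 B1 Cc A2 : Obj C) (d1 : Ext E Cc A1) (x1 : Hom A1 B1)
    (y1 : Hom B1 Cc) (d : Ext E Cc A2) :
  realizes d1 x1 y1 -> pull y1 d = 0 -> exists a : Hom A1 A2, push a d1 = d.
Proof.
move=> d1xy pull_d0; have [N [u [v duv]]] := realizes_exists d.
have [S [i1 [i2 [p1 [p2 Sbip]]]]] := biprod_exists A2 B1.
have [b [_ vb]] := realizes_morph (a := idm A2) (c := y1) (realizes_biprod Sbip) duv
  (etrans (push1 _) (esym pull_d0)).
case: Sbip => [_ [p2i2 _]].
have vbi2 : comp v (comp b i2) = comp (idm Cc) y1.
  by rewrite compA vb -compA p2i2 comp1r comp1l.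
have [a [_ pushd1]] := extri_ET3op d1xy duv vbi2.
by exists a; rewrite pushd1 pull1.
Qed.

Lemma isBiprod_shear (A1 A2 S : Obj C) (i : Hom A2 S) (s : Hom A1 S) (r : Hom S A2)
    (p : Hom S A1) (a : Hom A1 A2) :
  isBiprod i s r p -> isBiprod (s - comp i a) i p (r + comp a p).
Proof.
case=> [ri [ps [rs [pi ir_sp]]]].
have r_ia : comp r (comp i a) = a by rewrite compA ri comp1l.
have ap_s : comp (comp a p) s = a by rewrite -compA ps comp1r.
have ap_ia : comp (comp a p) (comp i a) = 0 by rewrite -compA [comp p _]compA pi comp0l comp0r.
rewrite /isBiprod; do !split.
- by rewrite compBr ps compA pi comp0l subr0.
- by rewrite compDl ri -compA pi comp0r addr0.
- exact: pi.
- by rewrite compDl !compBr rs r_ia ap_s ap_ia sub0r subr0 addNr.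
- rewrite compBl compDr (compA i a p) -ir_sp addrC -!addrA.
  by congr (_ + _); rewrite addrC subrK.
Qed.

(* (ET4)^op yields a split triangle A2 -> S -> A1; exactness of E(-, A2) along d1
   allows a change of splitting after which the retraction r onto A2 pushes dl to d2. *)
Lemma pullback_split (A1 B1 Cc A2 M : Obj C) (d1 : Ext E Cc A1) (x1 : Hom A1 B1)
    (y1 : Hom B1 Cc) (d2 : Ext E Cc A2) (m : Hom A2 M) (e : Hom M B1) :
  realizes d1 x1 y1 -> realizes (pull y1 d2) m e ->
  exists (S : Obj C) (h : Hom S M) (dl : Ext E Cc S) (s : Hom A1 S) (r : Hom S A2),
    [/\ realizes dl h (comp y1 e), realizes (0 : Ext E A2 A1) s r & push r dl = d2].
Proof.
move=> d1xy d2me.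
have [S [i [p [h [dl [dlh [_ [_ [ip [d1E pushE]]]]]]]]]] := extri_ET4op d2me d1xy.
have ip0 : realizes (0 : Ext E A1 A2) i p.
  by rewrite -pull_comp (realizes_comp0 d1xy) pull0l in ip.
have [s [r Sbip]] := realizes0_isBiprod ip0.
have pull_d2_0 : pull y1 (d2 - push r dl) = 0.
  rewrite pullBr -push_pull -pushE -push_comp.
  by case: Sbip => [-> _]; rewrite push1 subrr.
have [a pushd1] := push_of_pull_eq0 d1xy pull_d2_0.
exists S, h, dl, (s - comp i a), (r + comp a p); split => //.
  exact: realizes_biprod (isBiprod_shear a Sbip).
by rewrite pushDl push_comp -d1E pushd1 addrC subrK.
Qed.

(* Nakaoka--Palu, Proposition 3.15: M realizes y1^* d2. *)
Lemma pullback_triangles (A1 B1 Cc A2 B2 : Obj C) (d1 : Ext E Cc A1) (x1 : Hom A1 B1)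
    (y1 : Hom B1 Cc) (d2 : Ext E Cc A2) (x2 : Hom A2 B2) (y2 : Hom B2 Cc) :
  realizes d1 x1 y1 -> realizes d2 x2 y2 ->
  exists (M N : Obj C) (b : Hom B2 N),
    [/\ iso b, has_Etri E A2 M B1 & has_Etri E A1 M N].
Proof.
move=> d1xy d2xy; have [M [m [e d2me]]] := realizes_exists (pull y1 d2).
have [S [h [dl [s [r [dlh sr0 pushr]]]]]] := pullback_split d1xy d2me.
have [N [hN [dN [eN [dlN [shN [_ [_ [rN _]]]]]]]]] := extri_ET4 sr0 dlh.
rewrite pushr in rN.
have [b [bIso _]] := realizes_equiv d2xy rN.
exists M, N, b; split => //; first by exists m, e, (pull y1 d2).
by exists (comp h s), hN, dlN.
Qed.

Lemma has_Etri_zero (Z A : Obj C) : idm Z = 0 -> has_Etri E Z A A.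
Proof.
move=> Z0; exists 0, (idm A), 0; apply: (realizes_biprod (i2 := idm A) (p1 := 0)).
by rewrite /isBiprod !comp0l comp0r comp1l Z0 add0r; do !split.
Qed.

Section Resolution.
Variables X Y : Obj C -> Prop.
Hypotheses (HY : subcat Y) (HYe : ext_closed E Y) (HXY : generator E X Y).
Local Close Scope ring_scope.

Lemma ext_closed_pullback (A1 B1 Cc A2 B2 : Obj C) :
  has_Etri E A1 B1 Cc -> has_Etri E A2 B2 Cc -> Y A1 -> Y B2 ->
  exists M, Y M /\ has_Etri E A2 M B1.
Proof.
move=> [x1 [y1 [d1 d1xy]]] [x2 [y2 [d2 d2xy]]] YA1 YB2.
have [M [N [b [bIso A2MB1 A1MN]]]] := pullback_triangles d1xy d2xy.
have YN : Y N by case: HY => [isoY _]; exact: isoY bIso YB2.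
by exists M; split; first exact: HYe A1MN YA1 YN.
Qed.

Lemma resolution_step (L K K' Yk U : Obj C) :
  Y U -> Y Yk -> has_Etri E U L K -> has_Etri E K' Yk K ->
  exists Xk L' U', [/\ X Xk, Y U', has_Etri E L' Xk L & has_Etri E U' L' K'].
Proof.
move=> YU YYk ULK KYK.
have [M [YM [m [e [dm KML]]]]] := ext_closed_pullback ULK KYK YU YYk.
have [U' [Xk [XXk [YU' [f' [f [dl UXM]]]]]]] := HXY.2 M YM.
have [L' [d [e' [h [dl' [LXL [_ [_ [ULK' _]]]]]]]]] := extri_ET4op UXM KML.
exists Xk, L', U'; split => //; first by exists h, (comp e f), dl'.
by exists d, e', (pull m dl).
Qed.

Lemma resolution_prefix (n : nat) (A : Obj C) (K Yo : nat -> Obj C) :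
    K 1 = A -> (forall i, 1 <= i <= n -> Y (Yo i)) ->
    (forall i, 1 <= i <= n -> has_Etri E (K i.+1) (Yo i) (K i)) ->
  forall k, k <= n -> exists U V : Obj C, [/\ Y U, has_Etri E U V (K k.+1) &
    exists L Xo : nat -> Obj C, [/\ L 1 = A, L k.+1 = V &
      forall i, 1 <= i <= k -> X (Xo i) /\ has_Etri E (L i.+1) (Xo i) (L i)]].
Proof.
move=> K1 YYo KYK; elim=> [_ | k IHk lt_k_n].
  case: HY => [_ [[Z [Z0 YZ]] _]].
  exists Z, A; split => //; first by rewrite K1; exact: has_Etri_zero.
  by exists (fun _ => A), (fun _ => A); split => // -[|i] /andP[].
have [U [V [YU UVK [L [Xo [L1 Lk XL]]]]]] := IHk (ltnW lt_k_n).
have k1_in : 1 <= k.+1 <= n by rewrite lt_k_n.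
have [Xk [L' [U' [XXk YU' LXL ULK]]]] := resolution_step YU (YYo _ k1_in) UVK (KYK _ k1_in).
exists U', L'; split => //.
exists (fun i => if i <= k.+1 then L i else L'), (fun i => if i <= k then Xo i else Xk).
split => //= [|i /andP[i_gt0 i_le_k1]]; first by rewrite ltnn.
case: (leqP i k) => [i_le_k | k_lt_i].
  by rewrite ltnS i_le_k (leqW i_le_k); apply: XL; rewrite i_gt0 i_le_k.
have -> : i = k.+1 by apply/eqP; rewrite eqn_leq i_le_k1 k_lt_i.
by rewrite ltnn leqnn Lk.
Qed.

End Resolution.
End Extriangulated.

Local Close Scope ring_scope.

Theorem lemma3p8 (C : PreAddCat) (E : ExtData C) (HC : extriangulated E)
    (X Y : Obj C -> Prop) (HX : subcat X) (HY : subcat Y)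
    (HYe : ext_closed E Y) (HXY : generator E X Y)
    (n : nat) (hn : 1 <= n) (A A' : Obj C) (K Yo : nat -> Obj C)
    (hK1 : K 1 = A) (hKn : K n.+1 = A')
    (hY : forall i, 1 <= i <= n -> Y (Yo i))
    (htri : forall i, 1 <= i <= n -> has_Etri E (K i.+1) (Yo i) (K i)) :
  exists U V : Obj C, [/\ Y U, has_Etri E U V A' &
    exists L Xo : nat -> Obj C, [/\ L 1 = A, L n.+1 = V &
      forall i, 1 <= i <= n -> X (Xo i) /\ has_Etri E (L i.+1) (Xo i) (L i)]].
Proof.
by rewrite -hKn; exact: (resolution_prefix HC HY HYe HXY hK1 hY htri (leqnn n)).
Qed.
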